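(* Let $\mathcal D \subset \mathcal H$ be an (F)-domain and let $\mathcal A \subset \mathcal L^+(\mathcal D)$ be one of: (a) $\mathcal A = \mathcal F(\mathcal D)$; (b) a unital standard $*$-operator algebra; (c) a $*$-ideal of $\mathcal L^+(\mathcal D)$ with $\mathcal A \neq \mathcal F(\mathcal D)$. If $\Phi:\mathcal A\to\mathcal A$ is an additive bijection such that for all $A,B\in\mathcal A$, $A^+B = AB^+ = 0 \iff \Phi(A)^+\Phi(B) = \Phi(A)\Phi(B)^+ = 0$, then $\Phi$ maps rank-one operators to rank-one operators and $\Phi^{-1}$ maps rank-one operators to rank-one operators; in particular $\Phi$ restricts to an additive bijection of $\mathcal F(\mathcal D)$ onto itself preserving rank-one operators in both directions.
   Context: Let $\mathcal H$ be a complex Hilbert space, $\mathcal D$ a dense linear subspace. $\mathcal L^+(\mathcal D)$ denotes the set of linear operators $A$ defined on $\mathcal D$ with $A\mathcal D\subset\mathcal D$ and $A^*\mathcal D \subset \mathcal D$, a $*$-algebra with involution $A^+ = A^*|_{\mathcal D}$. $\mathcal D$ is an (F)-domain if it is a Fréchet space in the graph topology generated by the seminorms $\phi \mapsto \|A\phi\|$, $A \in \mathcal L^+(\mathcal D)$. $\mathcal F(\mathcal D)$ is the ideal of finite rank operators in $\mathcal L^+(\mathcal D)$. A standard ($*$-)operator algebra on $\mathcal D$ is a ($*$-)subalgebra of $\mathcal L^+(\mathcal D)$ containing $\mathcal F(\mathcal D)$; unital means it contains the identity. *)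

From HB Require Import structures.
From mathcomp Require Import all_boot all_order all_algebra.
From mathcomp Require Import complex reals.
From Stdlib Require Import ClassicalEpsilon.

Set Implicit Arguments.
Unset Strict Implicit.
Unset Printing Implicit Defensive.

Import Order.TTheory GRing.Theory Num.Theory.
Local Open Scope ring_scope.

Record HilbertSpace (R : realType) := {
  hcar :> lmodType R[i];
  hip : hcar -> hcar -> R[i];
  hip_linear : forall (a : R[i]) (x y z : hcar),
      hip (a *: x + y) z = a * hip x z + hip y z;
  hip_sym : forall x y : hcar, hip y x = (hip x y)^*;
  hip_ge0 : forall x : hcar, 0 <= hip x x;
  hip_eq0 : forall x : hcar, hip x x = 0 -> x = 0;
  hcomplete : forall u : nat -> hcar,
      (forall e : R[i], 0 < e -> exists N : nat, forall m n : nat,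
          (N <= m)%N -> (N <= n)%N -> sqrtC (hip (u m - u n) (u m - u n)) < e) ->
      exists x : hcar, forall e : R[i], 0 < e -> exists N : nat, forall n : nat,
          (N <= n)%N -> sqrtC (hip (u n - x) (u n - x)) < e
}.

Definition hnorm (R : realType) (H : HilbertSpace R) (x : H) : R[i] :=
  sqrtC (hip x x).

Record DenseSubspace (R : realType) (H : HilbertSpace R) := {
  dcar :> lmodType R[i];
  emb : dcar -> H;
  emb_linear : forall (a : R[i]) (x y : dcar), emb (a *: x + y) = a *: emb x + emb y;
  emb_inj : forall x y : dcar, emb x = emb y -> x = y;
  emb_dense : forall (x : H) (e : R[i]), 0 < e ->
      exists phi : dcar, hnorm (x - emb phi) < e
}.

Definition op (V : Type) := V -> V.

Section Ops.
Variables (R : realType) (H : HilbertSpace R) (D : DenseSubspace H).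

Definition ip (phi psi : D) : R[i] := hip (emb phi) (emb psi).
Definition dnorm (phi : D) : R[i] := hnorm (emb phi).

Definition op0 : op D := fun _ => 0.
Definition op1 : op D := fun x => x.
Definition opadd (A B : op D) : op D := fun x => A x + B x.
Definition opscale (a : R[i]) (A : op D) : op D := fun x => a *: A x.
Definition opmul (A B : op D) : op D := fun x => A (B x).

Definition op_linear (A : op D) : Prop :=
  forall (a : R[i]) (x y : D), A (a *: x + y) = a *: A x + A y.

(* A* D ⊂ D : every psi in D lies in the domain of the Hilbert adjoint A*
   and A* psi lies in D. *)
Definition adj_maps_D (A : op D) : Prop :=
  forall psi : D, exists eta : D, forall phi : D, ip (A phi) psi = ip phi eta.

Definition Lplus (A : op D) : Prop := op_linear A /\ adj_maps_D A.

Definition adj (A : op D) : op D := fun psi =>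
  epsilon (inhabits (0 : D)) (fun eta => forall phi : D, ip (A phi) psi = ip phi eta).

Definition finite_rank (A : op D) : Prop :=
  exists (n : nat) (v : 'I_n -> D), forall x : D,
    exists c : 'I_n -> R[i], A x = \sum_(k < n) c k *: v k.

Definition rank_one (A : op D) : Prop :=
  (exists x : D, A x <> 0) /\
  exists v : D, forall x : D, exists c : R[i], A x = c *: v.

Definition FD (A : op D) : Prop := Lplus A /\ finite_rank A.

(* (F)-domain: D is a Fréchet space in the graph topology given by the
   seminorms phi |-> ||A phi||, A in L^+(D): metrizable (generated by a
   countable subfamily of these seminorms) and (sequentially) complete. *)
Definition F_domain : Prop :=
  (exists An : nat -> op D, (forall n, Lplus (An n)) /\
     forall A, Lplus A -> exists (N : nat) (c : R[i]), forall phi : D,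
       dnorm (A phi) <= c * \sum_(k < N) dnorm (An k phi)) /\
  (forall u : nat -> D,
     (forall A, Lplus A -> forall e : R[i], 0 < e -> exists N : nat,
        forall m n : nat, (N <= m)%N -> (N <= n)%N -> dnorm (A (u m - u n)) < e) ->
     exists phi : D, forall A, Lplus A -> forall e : R[i], 0 < e ->
        exists N : nat, forall n : nat, (N <= n)%N -> dnorm (A (u n - phi)) < e).

Definition subalgebra (P : op D -> Prop) : Prop :=
  (forall A, P A -> Lplus A) /\ P op0 /\
  (forall A B, P A -> P B -> P (opadd A B)) /\
  (forall a A, P A -> P (opscale a A)) /\
  (forall A B, P A -> P B -> P (opmul A B)).

Definition star_closed (P : op D -> Prop) : Prop :=
  forall A, P A -> P (adj A).

Definition standard_star_algebra (P : op D -> Prop) : Prop :=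
  subalgebra P /\ star_closed P /\ (forall A, FD A -> P A).

Definition unital (P : op D -> Prop) : Prop := P op1.

Definition star_ideal (P : op D -> Prop) : Prop :=
  (forall A, P A -> Lplus A) /\ P op0 /\
  (forall A B, P A -> P B -> P (opadd A B)) /\
  (forall a A, P A -> P (opscale a A)) /\
  (forall A B, Lplus A -> P B -> P (opmul A B) /\ P (opmul B A)) /\
  star_closed P.

End Ops.

(* Write [rk u v] for the operator x |-> <x, v> u and call A, B orthogonal when
   A^+ B = A B^+ = 0.  Rank-one operators are exactly the nonzero elements of the
   algebra that are minimal for inclusion of orthogonal complements: a nonzero B
   whose complement contains that of [rk u v] has range in the line of u and
   adjoint range in the line of v, so every operator orthogonal to B is orthogonal
   to [rk u v]; conversely, inside an operator A of rank at least two one finds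
   [rk a b] with strictly larger complement.  This characterisation is phrased in
   terms of orthogonality only, so Phi preserves it in both directions.  Finite-rank
   operators are finite sums of [rk u v]'s, and additivity of Phi together with
   the preservation of rank at most one transports finite rank both ways. *)

From HB Require Import structures.
From mathcomp Require Import all_boot all_order all_algebra.
From mathcomp Require Import complex reals.
From mathcomp Require Import ring.
From Stdlib Require Import ClassicalEpsilon Classical FunctionalExtensionality.
Import GRing.Theory Num.Theory.
Local Open Scope ring_scope.

Set Implicit Arguments.
Unset Strict Implicit.
Unset Printing Implicit Defensive.

Lemma self_add_eq0 (V : zmodType) (a : V) : a = a + a -> a = 0.
Proof. by move=> h; apply: (@addrI _ a); rewrite addr0 -h. Qed.

Section InnerProduct.
Variables (R : realType) (H : HilbertSpace R) (D : DenseSubspace H).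
Implicit Types (x y z u v w : D).

Lemma emb0 : emb (0 : D) = 0.
Proof.
apply: (@self_add_eq0 (hcar H)); have := emb_linear (d:=D) 1 0 0.
by rewrite !scale1r !addr0.
Qed.

Lemma ipDZl (a : R[i]) x y z : ip (a *: x + y) z = a * ip x z + ip y z.
Proof. by rewrite /ip emb_linear hip_linear. Qed.

Lemma ip0l z : ip (0 : D) z = 0.
Proof.
apply: self_add_eq0; have := ipDZl 1 0 0 z.
by rewrite scale1r addr0 mul1r.
Qed.

Lemma ipZl a x z : ip (a *: x) z = a * ip x z.
Proof. by rewrite -[a *: x]addr0 ipDZl ip0l addr0. Qed.

Lemma ipDl x y z : ip (x + y) z = ip x z + ip y z.
Proof. by rewrite -[x]scale1r ipDZl mul1r scale1r. Qed.

Lemma ipBl x y z : ip (x - y) z = ip x z - ip y z.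
Proof. by rewrite ipDl -scaleN1r ipZl mulN1r. Qed.

Lemma ip_sym x y : ip y x = (ip x y)^*.
Proof. exact: hip_sym. Qed.

Lemma ipZr a x z : ip x (a *: z) = a^* * ip x z.
Proof. by rewrite ip_sym ipZl rmorphM /= -ip_sym. Qed.

Lemma ipDr x y z : ip x (y + z) = ip x y + ip x z.
Proof. by rewrite ip_sym ipDl rmorphD /= -!ip_sym. Qed.

Lemma ip0r x : ip x 0 = 0.
Proof. by rewrite ip_sym ip0l rmorph0. Qed.

Lemma ipBr x y z : ip x (y - z) = ip x y - ip x z.
Proof. by rewrite ip_sym ipBl rmorphB /= -!ip_sym. Qed.

Lemma ip_sym_eq0 x y : ip x y = 0 -> ip y x = 0.
Proof. by move=> h; rewrite ip_sym h conjC0. Qed.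

Lemma ipxx_eq0 x : ip x x = 0 -> x = 0.
Proof. by move=> h; apply: (@emb_inj _ _ D); rewrite emb0; exact: hip_eq0. Qed.

Lemma ipxx_neq0 x : x <> 0 -> ip x x != 0.
Proof. by move=> hx; apply/eqP => /ipxx_eq0. Qed.

Lemma ip_extr y1 y2 : (forall x, ip x y1 = ip x y2) -> y1 = y2.
Proof.
move=> h; apply/eqP; rewrite -subr_eq0; apply/eqP; apply: ipxx_eq0.
by rewrite ipBr h subrr.
Qed.

Lemma ip_extl x1 x2 : (forall y, ip x1 y = ip x2 y) -> x1 = x2.
Proof. by move=> h; apply: ip_extr => x; rewrite ip_sym h -ip_sym. Qed.

Definition proj e z := (ip z e / ip e e) *: e.

Lemma proj_orth e z : e <> 0 -> ip (z - proj e z) e = 0.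
Proof. by move=> he; rewrite ipBl /proj ipZl divfK ?subrr //; exact: ipxx_neq0. Qed.

Lemma projDZ e a x y : proj e (a *: x + y) = a *: proj e x + proj e y.
Proof. by rewrite /proj ipDZl mulrDl scalerDl scalerA mulrA. Qed.

Lemma proj_of_orth u y : u <> 0 ->
  (forall w, ip u w = 0 -> ip y w = 0) -> y = proj u y.
Proof.
move=> hu h; set w := y - proj u y.
have uw : ip u w = 0 by apply: ip_sym_eq0; exact: proj_orth.
have ww : ip w w = 0.
  by rewrite {1}/w ipBl (h _ uw) /proj ipZl uw mulr0 subrr.
by apply/eqP; rewrite -subr_eq0; apply/eqP; exact: ipxx_eq0.
Qed.

Lemma parallel_of_orth_trivial v u y : v <> 0 -> u <> 0 ->
  (forall s, ip v s = 0 -> s = 0) -> exists k, y = k *: u.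
Proof.
move=> v0 u0 hv; have vacuous (z w : D) : ip v w = 0 -> ip z w = 0.
  by move=> /hv ->; rewrite ip0r.
have ey := proj_of_orth v0 (vacuous y); have eu := proj_of_orth v0 (vacuous u).
move: ey eu; rewrite /proj; set a := _ / _; set b := _ / _ => ey eu.
have b0 : b != 0 by apply/eqP => b0; apply: u0; rewrite eu b0 scale0r.
by exists (a / b); rewrite eu scalerA divfK.
Qed.

Lemma parallel_of_orth u v y : u <> 0 -> v <> 0 ->
  (forall w s, ip u w = 0 -> ip v s = 0 -> s <> 0 -> ip y w = 0) ->
  exists k, y = k *: u.
Proof.
move=> u0 v0 h; case: (classic (exists s, s <> 0 /\ ip v s = 0)) => [[s [s0 vs]]|hn].
  by exists (ip y u / ip u u); apply: proj_of_orth => // w uw; exact: h uw vs s0.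
apply: (parallel_of_orth_trivial _ v0 u0) => s vs.
by apply: NNPP => s0; apply: hn; exists s.
Qed.

Lemma exists_nonzero_orth (a g b : D) : a <> 0 -> g <> 0 -> ip g a = 0 -> b <> 0 ->
  exists s, s <> 0 /\ ip b s = 0.
Proof.
move=> a0 g0 ga b0; apply: NNPP => hn.
have [k eg] : exists k, g = k *: a.
  apply: (parallel_of_orth_trivial _ b0 a0) => s bs.
  by apply: NNPP => s0; apply: hn; exists s.
move: ga; rewrite eg ipZl => /eqP; rewrite mulf_eq0 (negbTE (ipxx_neq0 a0)) orbF.
by move/eqP=> k0; apply: g0; rewrite eg k0 scale0r.
Qed.

End InnerProduct.

Section Operators.
Variables (R : realType) (H : HilbertSpace R) (D : DenseSubspace H).
Implicit Types (x y z u v w : D) (A B C : op D).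

Lemma adjP A : Lplus A -> forall x y, ip (A x) y = ip x (adj A y).
Proof.
move=> [_ hA] x y; rewrite /adj; move: x.
exact: (epsilon_spec (inhabits (0 : D))
  (fun eta => forall x, ip (A x) y = ip x eta) (hA y)).
Qed.

Lemma adj_uniq A y eta : Lplus A ->
  (forall x, ip (A x) y = ip x eta) -> adj A y = eta.
Proof. by move=> hA h; apply: ip_extr => x; rewrite -adjP. Qed.

Lemma adj_neq0 A x : Lplus A -> A x <> 0 -> adj A (A x) <> 0.
Proof. by move=> hA hx h; have := ipxx_neq0 hx; rewrite adjP // h ip0r eqxx. Qed.

Lemma nonzero_opP A : (exists x, A x <> 0) <-> A <> @op0 _ _ D.
Proof.
split; first by move=> [x hx] e; apply: hx; rewrite e.
move=> hA; apply: NNPP => hn; apply: hA; apply: functional_extensionality => x.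
by apply: NNPP => hx; apply: hn; exists x.
Qed.

Definition rk u v : op D := fun x => ip x v *: u.

Lemma rk_Lplus u v : Lplus (rk u v).
Proof.
split; first by move=> a x y; rewrite /rk ipDZl scalerDl scalerA.
by move=> y; exists (ip y u *: v) => x; rewrite /rk ipZl ipZr -ip_sym mulrC.
Qed.

Lemma adj_rk u v y : adj (rk u v) y = ip y u *: v.
Proof.
apply: adj_uniq; first exact: rk_Lplus.
by move=> x; rewrite /rk ipZl ipZr -ip_sym mulrC.
Qed.

Lemma rk_neq0 u v : u <> 0 -> v <> 0 -> rk u v <> @op0 _ _ D.
Proof.
move=> u0 v0; apply/nonzero_opP; exists v; rewrite /rk => /eqP.
by rewrite scaler_eq0 (negbTE (ipxx_neq0 v0)) => /eqP.
Qed.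

Lemma rank_oneP A : Lplus A -> rank_one A ->
  exists u v, [/\ u <> 0, v <> 0 & A = rk u v].
Proof.
move=> hA [[x0 hx0] [e he]].
have e0 : e <> 0 by move=> e0; apply: hx0; have [c ->] := he x0; rewrite e0 scaler0.
have ee0 := ipxx_neq0 e0.
exists ((ip e e)^-1 *: e), (adj A e); split.
- by apply/eqP; rewrite scaler_eq0 negb_or invr_eq0 ee0; apply/eqP.
- move=> a0; apply: hx0; have [c hc] := he x0.
  have := adjP hA x0 e; rewrite a0 ip0r hc ipZl => /eqP.
  by rewrite mulf_eq0 (negbTE ee0) orbF => /eqP ->; rewrite scale0r.
- apply: functional_extensionality => x; rewrite /rk -adjP //.
  by have [c ->] := he x; rewrite ipZl scalerA mulfK.
Qed.

Definition orth A B := opmul (adj A) B = @op0 _ _ D /\ opmul A (adj B) = @op0 _ _ D.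

Lemma orthP A B : Lplus A -> Lplus B -> orth A B <->
  (forall x y, ip (A x) (B y) = 0) /\ (forall y z, ip (adj B y) (adj A z) = 0).
Proof.
move=> hA hB; split.
- case=> h1 h2; split.
  + move=> x y; rewrite adjP //.
    by have := congr1 (fun f => f y) h1; rewrite /opmul /op0 => ->; exact: ip0r.
  + move=> y z; rewrite -adjP //.
    by have := congr1 (fun f => f y) h2; rewrite /opmul /op0 => ->; exact: ip0l.
- case=> h1 h2; split; apply: functional_extensionality => y; rewrite /opmul /op0.
  + by apply: ip_extr => x; rewrite -adjP // h1 ip0r.
  + by apply: ip_extl => z; rewrite adjP // h2 ip0l.
Qed.

Lemma orth_rkl u v C : Lplus C -> adj C u = 0 -> C v = 0 -> orth (rk u v) C.
Proof.
move=> hC h1 h2; apply/orthP => //; first exact: rk_Lplus.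
split.
  by move=> x y; rewrite /rk ipZl [ip u _]ip_sym (adjP hC) h1 ip0r conjC0 mulr0.
by move=> y z; rewrite adj_rk ipZr [ip (adj C y) v]ip_sym -(adjP hC) h2 ip0l conjC0 mulr0.
Qed.

Lemma orth_rk_rk u v w s : ip u w = 0 -> ip v s = 0 -> orth (rk u v) (rk w s).
Proof.
move=> uw vs; apply: orth_rkl; first exact: rk_Lplus.
  by rewrite adj_rk uw scale0r.
by rewrite /rk vs scale0r.
Qed.

Lemma orth_rk_range A C x y : Lplus A -> Lplus C -> orth A C ->
  orth (rk (A x) (adj A y)) C.
Proof.
move=> hA hC /(orthP hA hC) [h1 h2]; apply: orth_rkl => //.
  by apply: ip_extr => z; rewrite -(adjP hC) ip0r; exact: ip_sym_eq0.
by apply: ip_extl => z; rewrite (adjP hC) ip0l; exact: ip_sym_eq0.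
Qed.

End Operators.

Section OrthMinimal.
Variables (R : realType) (H : HilbertSpace R) (D : DenseSubspace H).
Variable P : op D -> Prop.
Hypothesis P_Lplus : forall A, P A -> Lplus A.
Hypothesis P_rk : forall u v : D, P (rk u v).
Implicit Types (x y z u v w : D) (A B C : op D).

Definition orth_le A B := forall C, P C -> orth A C -> orth B C.

Definition orth_minimal A :=
  A <> @op0 _ _ D /\ forall B, P B -> B <> @op0 _ _ D -> orth_le A B -> orth_le B A.

Lemma orth_le_rk_range u v B x : P B -> u <> 0 -> v <> 0 ->
  orth_le (rk u v) B -> exists k, B x = k *: u.
Proof.
move=> PB u0 v0 hle; apply: (parallel_of_orth u0 v0) => w s uw vs s0.
have /(orthP (P_Lplus PB) (rk_Lplus _ _)) [h _] := hle _ (P_rk w s) (orth_rk_rk uw vs).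
move: (h x s); rewrite /rk ipZr => /eqP.
by rewrite mulf_eq0 conjC_eq0 (negbTE (ipxx_neq0 s0)) => /eqP.
Qed.

Lemma orth_le_rk_corange u v B y : P B -> u <> 0 -> v <> 0 ->
  orth_le (rk u v) B -> exists k, adj B y = k *: v.
Proof.
move=> PB u0 v0 hle; apply: (parallel_of_orth v0 u0) => w s vw us s0.
have /(orthP (P_Lplus PB) (rk_Lplus _ _)) [_ h] := hle _ (P_rk s w) (orth_rk_rk us vw).
move: (h s y); rewrite adj_rk ipZl => /eqP.
by rewrite mulf_eq0 (negbTE (ipxx_neq0 s0)) => /eqP /ip_sym_eq0.
Qed.

Lemma rank_one_orth_minimal A : P A -> rank_one A -> orth_minimal A.
Proof.
move=> PA r1A; have [u [v [u0 v0 ->]]] := rank_oneP (P_Lplus PA) r1A.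
split; first exact: rk_neq0.
move=> B PB /nonzero_opP [x0 Bx0] hle C PC /(orthP (P_Lplus PB) (P_Lplus PC)) [h1 h2].
have LC := P_Lplus PC.
have [k1 e1] := orth_le_rk_range x0 PB u0 v0 hle.
have [k2 e2] := orth_le_rk_corange (B x0) PB u0 v0 hle.
have k10 : k1 != 0 by apply/eqP => k0; apply: Bx0; rewrite e1 k0 scale0r.
have k20 : k2 != 0.
  by apply/eqP => k0; apply: (adj_neq0 (P_Lplus PB) Bx0); rewrite e2 k0 scale0r.
apply: orth_rkl => //.
  apply: ip_extr => x; rewrite -(adjP LC) ip0r; apply: ip_sym_eq0.
  by move: (h1 x0 x); rewrite e1 ipZl => /eqP; rewrite mulf_eq0 (negbTE k10) => /eqP.
apply: ip_extl => y; rewrite (adjP LC) ip0l; apply: ip_sym_eq0.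
move: (h2 y (B x0)); rewrite e2 ipZr => /eqP.
by rewrite mulf_eq0 conjC_eq0 (negbTE k20) => /eqP.
Qed.

(* With [a = A x0] and [b = A^+ a], the complement of [rk a b] contains that of [A];
   if [A] has rank at least two, a vector [g] of its range orthogonal to [a] gives
   [rk g s] orthogonal to [rk a b] but not to [A]. *)
Lemma orth_minimal_rank_one A : P A -> orth_minimal A -> rank_one A.
Proof.
move=> PA [/nonzero_opP [x0 Ax0] hmin]; have LA := P_Lplus PA.
apply: NNPP => nr1; set a := A x0; set b := adj A a.
have b0 : b <> 0 by apply: adj_neq0.
have hle : orth_le (rk a b) A.
  apply: hmin; [exact: P_rk | exact: rk_neq0 Ax0 b0 |].
  by move=> C PC; apply: orth_rk_range LA (P_Lplus PC).
have [w hw] : exists w, A w <> proj a (A w).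
  apply: NNPP => hn; apply: nr1; split; first by exists x0.
  exists a => x; exists (ip (A x) a / ip a a).
  by apply: NNPP => hne; apply: hn; exists x.
set g := A w - proj a (A w).
have g0 : g <> 0 by move=> /eqP; rewrite subr_eq0 => /eqP.
have ga : ip g a = 0 by apply: proj_orth.
have Awg : ip (A w) g = ip g g.
  by rewrite {2}/g ipBl /proj ipZl (ip_sym_eq0 ga) mulr0 subr0.
have [s [s0 bs]] := exists_nonzero_orth Ax0 g0 ga b0.
have /(orthP LA (rk_Lplus _ _)) [h _] := hle _ (P_rk g s) (orth_rk_rk (ip_sym_eq0 ga) bs).
move: (h w s); rewrite /rk ipZr Awg => /eqP.
rewrite mulf_eq0 conjC_eq0 (negbTE (ipxx_neq0 s0)) /=.
exact/negP/ipxx_neq0.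
Qed.

Lemma rank_one_orth_minimalE A : P A -> rank_one A <-> orth_minimal A.
Proof.
by move=> PA; split; [exact: rank_one_orth_minimal | exact: orth_minimal_rank_one].
Qed.

End OrthMinimal.

Section FiniteRank.
Variables (R : realType) (H : HilbertSpace R) (D : DenseSubspace H).
Implicit Types (x y z u v w e : D) (A B C : op D).

Lemma lin0 A : op_linear A -> A 0 = 0.
Proof. by move=> hA; apply: self_add_eq0; have := hA 1 0 0; rewrite !scale1r !addr0. Qed.

Lemma linZ A a x : op_linear A -> A (a *: x) = a *: A x.
Proof. by move=> hA; rewrite -[a *: x]addr0 hA lin0 // addr0. Qed.

Lemma Lplus0 : Lplus (@op0 _ _ D).
Proof.
split; first by move=> a x y; rewrite /op0 scaler0 addr0.
by move=> y; exists 0 => x; rewrite /op0 ip0l ip0r.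
Qed.

Lemma Lplus_add A B : Lplus A -> Lplus B -> Lplus (opadd A B).
Proof.
move=> hA hB; split.
  by move=> a x y; rewrite /opadd hA.1 hB.1 scalerDr addrACA.
by move=> y; exists (adj A y + adj B y) => x; rewrite /opadd ipDl ipDr !adjP.
Qed.

Lemma finite_rank0 : finite_rank (@op0 _ _ D).
Proof. by exists 0%N, (fun _ => 0) => x; exists (fun _ => 0); rewrite big_ord0. Qed.

Lemma rk_finite_rank u v : finite_rank (rk u v).
Proof. by exists 1%N, (fun _ => u) => x; exists (fun _ => ip x v); rewrite big_ord1. Qed.

Definition rank_le1 B := exists v, forall x, exists c, B x = c *: v.

Lemma rank_le1_rk u v : rank_le1 (rk u v).
Proof. by exists u => x; exists (ip x v). Qed.

Lemma rank_le1_op0 : rank_le1 (@op0 _ _ D).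
Proof. by exists 0 => x; exists 0; rewrite scale0r. Qed.

Lemma rank_le1_cases B : rank_le1 B -> B = @op0 _ _ D \/ rank_one B.
Proof.
move=> r1B; case: (classic (B = @op0 _ _ D)) => [|/nonzero_opP nzB]; first by left.
by right; split.
Qed.

Lemma finite_rank_addl A B : rank_le1 B -> finite_rank A -> finite_rank (opadd B A).
Proof.
move=> [v hB] [n [vs hA]].
exists n.+1, (fun k => if unlift ord0 k is Some j then vs j else v) => x.
have [c hc] := hA x; have [d hd] := hB x.
exists (fun k => if unlift ord0 k is Some j then c j else d).
rewrite big_ord_recl /= unlift_none.
by under eq_bigr do rewrite liftK; rewrite /opadd hd hc.
Qed.

Definition sumrk (s : seq (D * D)) : op D := fun x => \sum_(p <- s) ip x p.2 *: p.1.

Lemma sumrk_nil : sumrk [::] = @op0 _ _ D.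
Proof. by apply: functional_extensionality => x; rewrite /sumrk big_nil. Qed.

Lemma sumrk_cons p s : sumrk (p :: s) = opadd (rk p.1 p.2) (sumrk s).
Proof. by apply: functional_extensionality => x; rewrite /sumrk big_cons. Qed.

Definition coproj e z := z - proj e z.

Lemma coprojDZ e a x y : coproj e (a *: x + y) = a *: coproj e x + coproj e y.
Proof. by rewrite /coproj projDZ scalerBr opprD addrACA. Qed.

Lemma coproj_sum e n (c : 'I_n -> R[i]) (vs : 'I_n -> D) :
  coproj e (\sum_(k < n) c k *: vs k) = \sum_(k < n) c k *: coproj e (vs k).
Proof.
elim/big_rec2: _ => [|k y1 y2 _ <-].
  by rewrite /coproj /proj ip0l mul0r scale0r subr0.
by rewrite -coprojDZ.
Qed.

Lemma coproj_id e : e <> 0 -> coproj e e = 0.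
Proof. by move=> e0; rewrite /coproj /proj divff ?scale1r ?subrr //; exact: ipxx_neq0. Qed.

Lemma Lplus_coproj e A : Lplus A -> Lplus (fun x => coproj e (A x)).
Proof.
move=> LA; split; first by move=> a x y; rewrite LA.1 coprojDZ.
move=> y; exists (adj A y - (ip e y / ip e e)^* *: adj A e) => x.
rewrite /coproj ipBl ipBr ipZr conjCK !(adjP LA) /proj ipZl (adjP LA).
by congr (_ - _); ring.
Qed.

Lemma rk_coproj_decomp e A : Lplus A ->
  A = opadd (rk ((ip e e)^-1 *: e) (adj A e)) (fun x => coproj e (A x)).
Proof.
move=> LA; apply: functional_extensionality => x.
by rewrite /opadd /rk /coproj /proj -(adjP LA) scalerA addrC subrK.
Qed.

(* Split off the rank-one part along the first spanning vector and recurse. *)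
Lemma sumrk_of_span n (vs : 'I_n -> D) A : Lplus A ->
  (forall x, exists c : 'I_n -> R[i], A x = \sum_(k < n) c k *: vs k) ->
  exists s, A = sumrk s.
Proof.
elim: n vs A => [|n IH] vs A LA hA.
  exists [::]; rewrite sumrk_nil; apply: functional_extensionality => x.
  by have [c ->] := hA x; rewrite big_ord0.
set e := vs ord0.
case: (classic (e = 0)) => [e0|e0].
  apply: (IH (fun k => vs (lift ord0 k))) => // x.
  have [c ->] := hA x; exists (fun k => c (lift ord0 k)).
  by rewrite big_ord_recl -/e e0 scaler0 add0r.
have [s es] : exists s, (fun x => coproj e (A x)) = sumrk s.
  apply: (IH (fun k => coproj e (vs (lift ord0 k)))); first exact: Lplus_coproj.
  move=> x; have [c hc] := hA x; exists (fun k => c (lift ord0 k)).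
  by rewrite hc coproj_sum big_ord_recl coproj_id // scaler0 add0r.
exists (((ip e e)^-1 *: e, adj A e) :: s).
by rewrite sumrk_cons -es -rk_coproj_decomp.
Qed.

Lemma FD_sumrk A : FD A -> exists s, A = sumrk s.
Proof. by case=> LA [n [vs h]]; exact: sumrk_of_span LA h. Qed.

End FiniteRank.

Section AdmissibleClasses.
Variables (R : realType) (H : HilbertSpace R) (D : DenseSubspace H).
Variable P : op D -> Prop.
Implicit Types (x y z u v w : D) (A B C : op D).

Definition admissible_class :=
  (forall A, P A <-> FD A) \/
  (standard_star_algebra P /\ unital P) \/
  (star_ideal P /\ ~ (forall A, P A <-> FD A)).

Hypothesis hP : admissible_class.

Lemma admissible_Lplus A : P A -> Lplus A.
Proof. by case: hP => [h|[[[hs _] _]|[hs _]]] PA; [case/h: PA | exact: hs.1 | exact: hs.1]. Qed.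

Lemma admissible_op0 : P (@op0 _ _ D).
Proof.
case: hP => [h|[[[hs _] _]|[hs _]]]; [| exact: hs.2.1 | exact: hs.2.1].
by apply/h; split; [exact: Lplus0 | exact: finite_rank0].
Qed.

Lemma admissible_add_rank_le1 A B : P A -> P B -> rank_le1 B -> P (opadd B A).
Proof.
move=> PA PB r1B; case: hP => [h|[[[hs _] _]|[hs _]]]; [| exact: hs.2.2.1 | exact: hs.2.2.1].
apply/h; split; first exact: Lplus_add (admissible_Lplus PB) (admissible_Lplus PA).
by apply: finite_rank_addl r1B ((h A).1 PA).2.
Qed.

(* In a nonzero ideal, [rk u v] is [rk u a * A0 * rk x0 v] up to the scalar [<a, a>],
   where [a = A0 x0 <> 0]. *)
Lemma admissible_rk A0 u v : P A0 -> A0 <> @op0 _ _ D -> P (rk u v).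
Proof.
move=> PA0 /nonzero_opP [x0 Ax0].
case: hP => [h|[[[_ [_ hFD]] _]|[[_ [_ [_ [hZ [hI _]]]]] _]]].
- by apply/h; split; [exact: rk_Lplus | exact: rk_finite_rank].
- by apply: hFD; split; [exact: rk_Lplus | exact: rk_finite_rank].
set a := A0 x0; have aa : ip a a != 0 by exact: ipxx_neq0.
have P1 := (hI _ _ (rk_Lplus x0 v) PA0).2.
have P2 := (hI _ _ (rk_Lplus u a) P1).1.
suff -> : rk u v = opscale (ip a a)^-1 (opmul (rk u a) (opmul A0 (rk x0 v))).
  exact: hZ.
apply: functional_extensionality => x.
rewrite /opscale /opmul /rk (linZ _ _ (admissible_Lplus PA0).1) -/a.
by rewrite ipZl scalerA mulrC -mulrA divff // mulr1.
Qed.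

End AdmissibleClasses.

Section Preserver.
Variables (R : realType) (H : HilbertSpace R) (D : DenseSubspace H).
Variables (P : op D -> Prop) (Phi : op D -> op D).
Hypothesis P_Lplus : forall A, P A -> Lplus A.
Hypothesis P_op0 : P (@op0 _ _ D).
Hypothesis P_rk : forall u v : D, P (rk u v).
Hypothesis P_add_rank_le1 : forall A B, P A -> P B -> rank_le1 B -> P (opadd B A).
Hypothesis Phi_P : forall A, P A -> P (Phi A).
Hypothesis Phi_inj : forall A B, P A -> P B -> Phi A = Phi B -> A = B.
Hypothesis Phi_surj : forall B, P B -> exists A, P A /\ Phi A = B.
Hypothesis Phi_add : forall A B, P A -> P B -> Phi (opadd A B) = opadd (Phi A) (Phi B).
Hypothesis Phi_orth : forall A B, P A -> P B -> (orth A B <-> orth (Phi A) (Phi B)).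
Implicit Types (A B C : op D).

Lemma Phi_op0 : Phi (@op0 _ _ D) = @op0 _ _ D.
Proof.
have op00 : opadd (@op0 _ _ D) (@op0 _ _ D) = @op0 _ _ D.
  by apply: functional_extensionality => x; rewrite /opadd /op0 addr0.
have := Phi_add P_op0 P_op0; rewrite op00 => h.
apply: functional_extensionality => x; apply: self_add_eq0.
exact: (congr1 (fun f => f x) h).
Qed.

Lemma Phi_eq0 A : P A -> Phi A = @op0 _ _ D <-> A = @op0 _ _ D.
Proof.
move=> PA; split; last by move=> ->; exact: Phi_op0.
by move=> h; apply: Phi_inj => //; rewrite h Phi_op0.
Qed.

Lemma Phi_orth_le A B : P A -> P B -> orth_le P A B <-> orth_le P (Phi A) (Phi B).
Proof.
move=> PA PB; split=> hle C.
- move=> /Phi_surj [E [PE <-]] /(Phi_orth PA PE) oAE.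
  exact/(Phi_orth PB PE)/hle.
- by move=> PC /(Phi_orth PA PC) /(hle _ (Phi_P PC)) /(Phi_orth PB PC).
Qed.

Lemma Phi_orth_minimal A : P A -> orth_minimal P A <-> orth_minimal P (Phi A).
Proof.
move=> PA; split=> [[nA hmin]|[nA hmin]]; split.
- by move/(Phi_eq0 PA).
- move=> B' /Phi_surj [B [PB <-]] nB /(Phi_orth_le PA PB) hle.
  apply/(Phi_orth_le PB PA)/hmin => //.
  by move=> B0; apply: nB; rewrite B0 Phi_op0.
- by move=> A0; apply: nA; rewrite A0 Phi_op0.
- move=> B PB nB /(Phi_orth_le PA PB) hle; apply/(Phi_orth_le PB PA).
  by apply: hmin hle; [exact: Phi_P | move/(Phi_eq0 PB)].
Qed.

Lemma Phi_rank_one A : P A -> rank_one A <-> rank_one (Phi A).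
Proof.
move=> PA; rewrite !(rank_one_orth_minimalE P_Lplus P_rk) //; last exact: Phi_P.
exact: Phi_orth_minimal.
Qed.

Lemma Phi_rank_le1 A : P A -> rank_le1 A <-> rank_le1 (Phi A).
Proof.
move=> PA; split => /rank_le1_cases [A0|r1].
- by rewrite A0 Phi_op0; exact: rank_le1_op0.
- by case/(Phi_rank_one PA): r1 => _.
- by move/(Phi_eq0 PA): A0 => ->; exact: rank_le1_op0.
- by case/(Phi_rank_one PA): r1 => _.
Qed.

Lemma P_sumrk s : P (sumrk s).
Proof.
elim: s => [|p s IH]; first by rewrite sumrk_nil.
by rewrite sumrk_cons; apply: P_add_rank_le1 => //; exact: rank_le1_rk.
Qed.

Lemma Phi_sumrk_finite_rank s : finite_rank (Phi (sumrk s)).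
Proof.
elim: s => [|p s IH]; first by rewrite sumrk_nil Phi_op0; exact: finite_rank0.
rewrite sumrk_cons Phi_add //; last exact: P_sumrk.
by apply: finite_rank_addl IH; apply/(Phi_rank_le1 (P_rk _ _)); exact: rank_le1_rk.
Qed.

Lemma Phi_preimage_sumrk s : exists S, [/\ P S, Phi S = sumrk s & finite_rank S].
Proof.
elim: s => [|p s [S [PS eS fS]]].
  by exists (@op0 _ _ D); rewrite sumrk_nil Phi_op0; split => //; exact: finite_rank0.
have [S1 [PS1 eS1]] := Phi_surj (P_rk p.1 p.2).
have r1S1 : rank_le1 S1 by apply/(Phi_rank_le1 PS1); rewrite eS1; exact: rank_le1_rk.
exists (opadd S1 S); split; first exact: P_add_rank_le1.
  by rewrite Phi_add // eS1 eS sumrk_cons.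
exact: finite_rank_addl.
Qed.

Lemma Phi_FD A : P A -> FD A <-> FD (Phi A).
Proof.
move=> PA; split=> /FD_sumrk [s es].
- split; first exact: P_Lplus (Phi_P PA).
  by rewrite es; exact: Phi_sumrk_finite_rank.
- have [S [PS eS fS]] := Phi_preimage_sumrk s.
  have -> : A = S by apply: Phi_inj => //; rewrite eS es.
  by split; [exact: P_Lplus | exact: fS].
Qed.

End Preserver.

Theorem mainTheorem4 (R : realType) (H : HilbertSpace R) (D : DenseSubspace H)
    (P : op D -> Prop) (Phi : op D -> op D) :
  F_domain D ->
  ((forall A, P A <-> FD A) \/
   (standard_star_algebra P /\ unital P) \/
   (star_ideal P /\ ~ (forall A, P A <-> FD A))) ->
  (* Phi is an additive bijection of P onto itself *)
  (forall A, P A -> P (Phi A)) ->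
  (forall A B, P A -> P B -> Phi A = Phi B -> A = B) ->
  (forall B, P B -> exists A, P A /\ Phi A = B) ->
  (forall A B, P A -> P B -> Phi (opadd A B) = opadd (Phi A) (Phi B)) ->
  (* preservation of zero products in both directions *)
  (forall A B, P A -> P B ->
     (opmul (adj A) B = @op0 _ _ D /\ opmul A (adj B) = @op0 _ _ D <->
      opmul (adj (Phi A)) (Phi B) = @op0 _ _ D /\ opmul (Phi A) (adj (Phi B)) = @op0 _ _ D)) ->
  forall A, P A ->
    (rank_one A <-> rank_one (Phi A)) /\ (FD A <-> FD (Phi A)).
Proof.
move=> _ hP Phi_P Phi_inj Phi_surj Phi_add Phi_orth A PA.
have P_Lplus := admissible_Lplus hP; have P_op0 := admissible_op0 hP.
have P_add := admissible_add_rank_le1 hP.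
case: (classic (exists A0, P A0 /\ A0 <> @op0 _ _ D)) => [[A0 [PA0 A00]]|trivialP].
  have P_rk u v := admissible_rk hP u v PA0 A00.
  split.
    exact: (Phi_rank_one P_Lplus P_op0 P_rk Phi_P Phi_inj Phi_surj Phi_add Phi_orth).
  exact: (Phi_FD P_Lplus P_op0 P_rk P_add Phi_P Phi_inj Phi_surj Phi_add Phi_orth).
have P_eq0 B : P B -> B = @op0 _ _ D.
  by move=> PB; apply: NNPP => B0; apply: trivialP; exists B.
by rewrite (P_eq0 _ (Phi_P _ PA)) (P_eq0 _ PA).
Qed.
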